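(* Assume the linear setting below. For every integer $k\ge0$, \[ \min\left\{b_{\varepsilon s^k+s^k-1}:\ \varepsilon\in\{1,\dots,s-1\}\right\}=b_{s^{k+1}-1}, \] i.e. among the integers with base-$s$ digits $\varepsilon\,(s-1)^k$, $\varepsilon\ne0$, the value of $b$ is minimal for $\varepsilon=s-1$. In particular $b_{s-1}\le b_{s-2}\le\cdots\le b_1$.
   Context: Linear setting: integers $q\ge2$, $r\in\{0,1,\dots,q-1\}$, $p>q+r$; $A=\{d\in\{0,1,\dots,p-1\}: d\equiv r\pmod q\}$, $s=\#A\ge2$, and $h(i)=qi+r$ for $0\le i\le s-1$. For a positive integer $n$ with base-$s$ expansion $n=\sum_{i=0}^k\varepsilon_i s^i$ ($\varepsilon_k\ne0$), $a_n=\sum_{i=0}^k h(\varepsilon_i)p^i$ and $b_n=a_n/n^{\log_s p}$. *)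

From mathcomp Require Import all_boot.
From Stdlib Require Import Reals.
Set Implicit Arguments. Unset Strict Implicit. Unset Printing Implicit Defensive.

Definition sA (q r p : nat) : nat := count (fun d => d %% q == r) (iota 0 p).

Definition hh (q r i : nat) : nat := q * i + r.

Definition digit (s n i : nat) : nat := (n %/ s ^ i) %% s.

Definition a_seq (q r p n : nat) : nat :=
  let s := sA q r p in
  \sum_(i < (trunc_log s n).+1) hh q r (digit s n i) * p ^ i.

Definition b_seq (q r p n : nat) : R :=
  (INR (a_seq q r p n) /
   Rpower (INR n) (ln (INR p) / ln (INR (sA q r p))))%R.

From mathcomp Require Import all_boot zify.
From Stdlib Require Import Reals Lra Psatz.

(* The integers with base-s digits [e (s-1)^k] are [n = (e+1) s^k - 1], and summing the
   geometric series gives [a_n = S^α (h(e) + c) - c] with [S = s^k], [α = log_s p],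
   [c = h(s-1)/(p-1)], so everything reduces to inequalities for the convex map
   [x ↦ x^α] (α >= 1).  Convexity through the chord from 1 to s gives
   [c (e+1)^α <= h(e) + c], with equality at [e = s-1]; hence
   [b_n >= c g((e+1) S)] for [g x = (x^α - 1)/(x - 1)^α], with equality at [e = s-1].
   Convexity also makes [g] nonincreasing on (1, +oo), which gives the first claim.
   The second is [(q(e+1)+r)/(e+1)^α <= (qe+r)/e^α], from [((e+1)/e)^α >= (e+1)/e]. *)

Set Implicit Arguments. Unset Strict Implicit.

(* The definitions were elaborated with Reals loaded after MathComp, so [^] on
   [nat] is Stdlib's [Nat.pow] there and in this file; we switch to [expn] to reason. *)
Lemma Nat_powE m n : Nat.pow m n = expn m n.
Proof. by elim: n => //= n IHn; rewrite expnS IHn. Qed.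

Lemma sA_le q r p : sA q r p <= p.
Proof. by rewrite /sA -[p in _ <= p](size_iota 0) count_size. Qed.

Lemma sA_ge2 q r p : r < q -> q + r < p -> 2 <= sA q r p.
Proof.
move=> ltrq ltqrp; rewrite /sA -size_filter.
have uniq_rqr : uniq [:: r; q + r] by rewrite /= inE -{1}[r]add0n eqn_add2r andbT; lia.
apply: (uniq_leq_size uniq_rqr) => d; rewrite !inE mem_filter mem_iota add0n.
by case/orP=> /eqP->; rewrite ?modnDl modn_small // eqxx /=; lia.
Qed.

Definition nines s e k := e * s ^ k + s ^ k - 1.

Lemma nines0 s e : nines s e 0 = e.
Proof. by rewrite /nines /= muln1 addnK. Qed.

Lemma ninesS s e k : 0 < s -> nines s e k.+1 = s * nines s e k + s.-1.
Proof.
move=> s_gt0; rewrite /nines !Nat_powE expnS.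
have : 0 < expn s k by rewrite expn_gt0 s_gt0.
move: (expn s k) => X X_gt0; nia.
Qed.

Lemma expS_sub1_nines s k : 0 < s -> s ^ k.+1 - 1 = nines s s.-1 k.
Proof.
by case: s => // s' _; rewrite /nines !Nat_powE expnS mulSn addnC.
Qed.

Lemma digit_mul_add0 s m d : d < s -> digit s (s * m + d) 0 = d.
Proof. by move=> ltds; rewrite /digit divn1 mulnC modnMDl modn_small. Qed.

Lemma digit_mul_addS s m d i : d < s -> digit s (s * m + d) i.+1 = digit s m i.
Proof.
move=> ltds; rewrite /digit !Nat_powE expnS divnMA [s * m]mulnC divnMDl; last lia.
by rewrite (divn_small ltds) addn0.
Qed.

Lemma trunc_log_nines s e k : 1 < s -> 0 < e < s -> trunc_log s (nines s e k) = k.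
Proof.
move=> s_gt1 /andP[e_gt0 ltes]; apply: trunc_log_eq => //.
rewrite /nines !Nat_powE expnS.
have : 0 < expn s k by rewrite expn_gt0; lia.
move: (expn s k) => X X_gt0; apply/andP; split; nia.
Qed.

Lemma digit_sum_nines (f : nat -> nat) s e p k : 1 < s -> e < s ->
  \sum_(i < k.+1) f (digit s (nines s e k) i) * p ^ i
  = f e * p ^ k + f s.-1 * \sum_(i < k) p ^ i.
Proof.
move=> s_gt1 ltes; have ltps : s.-1 < s by lia.
under eq_bigr do rewrite Nat_powE; under [\sum_(i < k) _]eq_bigr do rewrite Nat_powE.
rewrite Nat_powE; elim: k => [|k IHk].
  by rewrite !big_ord1 big_ord0 nines0 /digit /= divn1 modn_small // muln0 addn0.
rewrite big_ord_recl ninesS ?digit_mul_add0 //; last lia.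
under [in LHS]eq_bigr => i _ do rewrite lift0 digit_mul_addS // expnS mulnCA.
rewrite -big_distrr /= IHk [in RHS]big_ord_recl.
under [in RHS]eq_bigr => i _ do rewrite lift0 expnS.
rewrite -big_distrr /= expnS expn0 !mulnDr muln1 addnCA !mulnA.
by rewrite [p * f e]mulnC [p * f s.-1]mulnC.
Qed.

Lemma a_seq_nines q r p e k : 1 < sA q r p -> 0 < e < sA q r p ->
  a_seq q r p (nines (sA q r p) e k)
  = hh q r e * p ^ k + hh q r (sA q r p).-1 * \sum_(i < k) p ^ i.
Proof.
by move=> s_gt1 e_bd; rewrite /a_seq trunc_log_nines // digit_sum_nines //; case/andP: e_bd.
Qed.

Section RealInequalities.
Local Open Scope R_scope.

Lemma Rpower_1_l a : Rpower 1 a = 1.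
Proof. by rewrite /Rpower ln_1 Rmult_0_r exp_0. Qed.

Lemma Rpower_gt0 x a : 0 < Rpower x a.
Proof. exact: exp_pos. Qed.

Lemma Rpower_log_ratio x y : 1 < x -> 0 < y -> Rpower x (ln y / ln x) = y.
Proof.
move=> x_gt1 y_gt0; have lnx_gt0 : 0 < ln x by rewrite -ln_1; apply: ln_increasing; lra.
by rewrite /Rpower (_ : ln y / ln x * ln x = ln y) ?exp_ln //; field; lra.
Qed.

Lemma Rpower_pow_log_ratio x y k : 1 < x -> 0 < y -> Rpower (x ^ k) (ln y / ln x) = y ^ k.
Proof.
move=> x_gt1 y_gt0; have x_gt0 : 0 < x by lra.
rewrite -(Rpower_pow k x x_gt0) Rpower_mult Rmult_comm -Rpower_mult.
by rewrite Rpower_log_ratio // Rpower_pow.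
Qed.

Lemma log_ratio_ge1 x y : 1 < x <= y -> 1 <= ln y / ln x.
Proof.
move=> xy; have lnx_gt0 : 0 < ln x by rewrite -ln_1; apply: ln_increasing; lra.
have le : ln x <= ln y.
  by case: (Req_dec x y) => [-> | neq]; [lra | left; apply: ln_increasing; lra].
apply: (Rmult_le_reg_r (ln x)) => //.
by rewrite Rmult_1_l /Rdiv Rmult_assoc Rinv_l; lra.
Qed.

Lemma Rdiv_le_cross u v x y : 0 < x -> 0 < y -> u * y <= v * x -> u / x <= v / y.
Proof.
move=> x_gt0 y_gt0 cross.
have -> : u / x = u * y * / (x * y) by field; lra.
have -> : v / y = v * x * / (x * y) by field; lra.
by apply: Rmult_le_compat_r => //; left; apply: Rinv_0_lt_compat; nra.
Qed.

Lemma Rdiv_in_01 x y : 0 <= x <= y -> 0 < y -> 0 <= x / y <= 1.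
Proof.
move=> xy y_gt0; have := Rinv_0_lt_compat y y_gt0; rewrite /Rdiv; split; first nra.
by rewrite -(Rinv_r y); [apply: Rmult_le_compat_r; lra | lra].
Qed.

Lemma Rpower_bernoulli a x : 1 <= a -> 0 < x -> 1 + a * (x - 1) <= Rpower x a.
Proof.
move=> a_ge1 x_gt0.
have deriv y : 0 < y -> derivable_pt_lim (fun z => Rpower z a) y (a * Rpower y (a - 1)).
  by move=> y_gt0; apply: derivable_pt_lim_power.
case: (Rtotal_order x 1) => [x_lt1|[->|x_gt1]]; last first.
- have [y [mvt [y_gt1 _]]] := MVT_cor2 _ _ 1 x x_gt1 (fun y Hy => deriv y ltac:(lra)).
  have le1 : Rpower 1 (a - 1) <= Rpower y (a - 1) by apply: Rle_Rpower_l; lra.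
  rewrite Rpower_1_l in le1; rewrite Rpower_1_l in mvt.
  have : 0 <= a * (x - 1) by nra.
  nra.
- rewrite Rpower_1_l; lra.
- have [y [mvt [y_gtx y_lt1]]] := MVT_cor2 _ _ x 1 x_lt1 (fun y Hy => deriv y ltac:(lra)).
  have le1 : Rpower y (a - 1) <= Rpower 1 (a - 1) by apply: Rle_Rpower_l; lra.
  rewrite Rpower_1_l in le1; rewrite Rpower_1_l in mvt.
  have : 0 <= a * (1 - x) by nra.
  nra.
Qed.

Lemma Rpower_tangent a z w : 1 <= a -> 0 < z -> 0 < w ->
  Rpower z a + a * Rpower z a / z * (w - z) <= Rpower w a.
Proof.
move=> a_ge1 z_gt0 w_gt0.
have wz_gt0 : 0 < w / z by apply: Rdiv_lt_0_compat.
have scale : Rpower (w / z) a * Rpower z a = Rpower w a.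
  by rewrite Rpower_mult_distr //; congr Rpower; field; lra.
have := Rmult_le_compat_r _ _ _ (Rlt_le _ _ (Rpower_gt0 z a)) (Rpower_bernoulli a_ge1 wz_gt0).
rewrite scale; apply: Rle_trans; right; field; lra.
Qed.

Lemma Rpower_convex a x y m : 1 <= a -> 0 < x -> 0 < y -> 0 <= m <= 1 ->
  Rpower ((1 - m) * x + m * y) a <= (1 - m) * Rpower x a + m * Rpower y a.
Proof.
move=> a_ge1 x_gt0 y_gt0 m01.
set z := (1 - m) * x + m * y.
have z_gt0 : 0 < z by rewrite /z; nra.
have := Rpower_tangent a_ge1 z_gt0 x_gt0; have := Rpower_tangent a_ge1 z_gt0 y_gt0.
set t := a * Rpower z a / z; set f := Rpower z a => ty tx.
(* the tangent terms cancel in the convex combination *)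
have -> : f = (1 - m) * (f + t * (x - z)) + m * (f + t * (y - z)) by rewrite /z; ring.
apply: Rplus_le_compat; apply: Rmult_le_compat_l; lra.
Qed.

Lemma Rpower_le_chord a s t : 1 <= a -> 1 < s -> 1 <= t <= s ->
  Rpower t a <= 1 + (t - 1) * (Rpower s a - 1) / (s - 1).
Proof.
move=> a_ge1 s_gt1 t1s; set m := (t - 1) / (s - 1).
have m01 : 0 <= m <= 1 by apply: Rdiv_in_01; lra.
have := Rpower_convex a_ge1 Rlt_0_1 (ltac:(lra) : 0 < s) m01.
rewrite Rpower_1_l; have -> : (1 - m) * 1 + m * s = t by rewrite /m; field; lra.
by move/Rle_trans; apply; right; rewrite /m; field; lra.
Qed.

Lemma Rpower_sub_le_shift a u b d : 1 <= a -> 0 < u <= b -> 0 <= d ->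
  Rpower b a - Rpower u a <= Rpower (b + d) a - Rpower (u + d) a.
Proof.
move=> a_ge1 ub d_ge0.
case: (Req_dec (b - u + d) 0) => [D0 | D_neq0].
  have [-> ->] : b = u /\ d = 0 by split; lra.
  by rewrite Rplus_0_r; lra.
set D := b - u + d; set m := (b - u) / D.
have D_gt0 : 0 < D by rewrite /D; lra.
have m01 : 0 <= m <= 1 by apply: Rdiv_in_01 => //; rewrite /D; lra.
have m'01 : 0 <= 1 - m <= 1 by lra.
(* b and u + d are the two mirror-image convex combinations of u and b + d *)
have := Rpower_convex a_ge1 (proj1 ub) (ltac:(lra) : 0 < b + d) m01.
have := Rpower_convex a_ge1 (proj1 ub) (ltac:(lra) : 0 < b + d) m'01.
have -> : (1 - m) * u + m * (b + d) = b by rewrite /m /D; field.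
have -> : (1 - (1 - m)) * u + (1 - m) * (b + d) = u + d by rewrite /m /D; field.
lra.
Qed.

Lemma Rpower_sub1_ratio_antitone a x y : 1 <= a -> 1 < x <= y ->
  (Rpower y a - 1) / Rpower (y - 1) a <= (Rpower x a - 1) / Rpower (x - 1) a.
Proof.
move=> a_ge1 xy; set l := (x - 1) / (y - 1).
have l_gt0 : 0 < l by apply: Rdiv_lt_0_compat; lra.
have [_ l_le1] : 0 <= l <= 1 by apply: Rdiv_in_01; lra.
have x_l : x - 1 = l * (y - 1) by rewrite /l; field; lra.
clearbody l.
have := Rpower_sub_le_shift a_ge1 (conj l_gt0 l_le1) (ltac:(lra) : 0 <= x - 1).
have -> : l + (x - 1) = l * y by rewrite x_l; ring.
rewrite x_l -!Rpower_mult_distr ?Rpower_1_l; try lra.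
have -> : 1 + l * (y - 1) = x by lra.
move=> shift; apply: Rdiv_le_cross; try apply: Rmult_lt_0_compat; try exact: Rpower_gt0.
rewrite -Rmult_assoc; apply: Rmult_le_compat_r; [exact/Rlt_le/Rpower_gt0 | lra].
Qed.

Lemma Rpower_succ_le_affine a s q r c e : 1 <= a -> 1 < s -> 0 <= r -> 0 <= c ->
  c * (Rpower s a - 1) = q * (s - 1) + r -> 0 <= e <= s - 1 ->
  c * Rpower (e + 1) a <= q * e + r + c.
Proof.
move=> a_ge1 s_gt1 r_ge0 c_ge0 c_def e_bd.
have := Rpower_le_chord a_ge1 s_gt1 (ltac:(lra) : 1 <= e + 1 <= s).
move=> /(Rmult_le_compat_l _ _ _ c_ge0) /Rle_trans; apply.
have [_ frac_le1] : 0 <= e / (s - 1) <= 1 by apply: Rdiv_in_01; lra.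
have -> : c * (1 + (e + 1 - 1) * (Rpower s a - 1) / (s - 1))
          = c + e * (c * (Rpower s a - 1)) / (s - 1) by field; lra.
rewrite c_def.
have -> : c + e * (q * (s - 1) + r) / (s - 1) = c + q * e + r * (e / (s - 1)) by field; lra.
nra.
Qed.

Lemma affine_div_Rpower_succ_le a q r e : 1 <= a -> 1 <= e -> 0 <= q -> 0 <= r ->
  (q * (e + 1) + r) / Rpower (e + 1) a <= (q * e + r) / Rpower e a.
Proof.
move=> a_ge1 e_ge1 q_ge0 r_ge0.
have inv_e_gt0 : 0 < / e by apply: Rinv_0_lt_compat; lra.
have ratioE : (e + 1) / e = 1 + / e by field; lra.
have grow : (e + 1) / e * Rpower e a <= Rpower (e + 1) a.
  have -> : Rpower (e + 1) a = Rpower ((e + 1) / e) a * Rpower e a.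
    by rewrite Rpower_mult_distr; [congr Rpower; field | |]; lra.
  apply: Rmult_le_compat_r; first exact/Rlt_le/Rpower_gt0.
  by rewrite -{1}(Rpower_1 ((e + 1) / e)); [apply: Rle_Rpower | ]; lra.
apply: Rdiv_le_cross; try exact: Rpower_gt0.
have := Rpower_gt0 e a; set E := Rpower e a => E_gt0.
apply: Rle_trans (Rmult_le_compat_l _ _ _ _ grow); last nra.
have -> : (q * e + r) * ((e + 1) / e * E) = (q * (e + 1) + r + r * / e) * E by field; lra.
by apply: Rmult_le_compat_r; nra.
Qed.

(* [b_nines α q r c S e] is [b] at the integer with base-s digits [e (s-1)^k], for
   [S = s^k] and [c = h(s-1)/(p-1)] (see [b_seq_nines]). *)
Definition b_nines (a q r c S e : R) : R :=
  (Rpower S a * (q * e + r + c) - c) / Rpower ((e + 1) * S - 1) a.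

Lemma b_nines_last_le a s q r c S e : 1 <= a -> 1 < s -> 0 <= r -> 0 <= c -> 1 <= S ->
  c * (Rpower s a - 1) = q * (s - 1) + r -> 1 <= e <= s - 1 ->
  b_nines a q r c S (s - 1) <= b_nines a q r c S e.
Proof.
move=> a_ge1 s_gt1 r_ge0 c_ge0 S_ge1 c_def e_bd.
have S_gt0 : 0 < S by lra.
have powM x : 0 < x -> Rpower x a * Rpower S a = Rpower (x * S) a.
  by move=> x_gt0; rewrite Rpower_mult_distr.
have last : b_nines a q r c S (s - 1) = c * ((Rpower (s * S) a - 1) / Rpower (s * S - 1) a).
  rewrite /b_nines -powM; last lra.
  have -> : s - 1 + 1 = s by ring.
  by rewrite /Rdiv; rewrite -c_def; ring.
have lower : c * ((Rpower ((e + 1) * S) a - 1) / Rpower ((e + 1) * S - 1) a)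
             <= b_nines a q r c S e.
  rewrite /b_nines /Rdiv -Rmult_assoc; apply: Rmult_le_compat_r.
    exact/Rlt_le/Rinv_0_lt_compat/Rpower_gt0.
  rewrite -powM; last lra.
  have := Rpower_succ_le_affine a_ge1 s_gt1 r_ge0 c_ge0 c_def (ltac:(lra) : 0 <= e <= s - 1).
  have := Rpower_gt0 S a; nra.
rewrite last; apply: Rle_trans lower; apply: Rmult_le_compat_l => //.
by apply: Rpower_sub1_ratio_antitone => //; nra.
Qed.

Lemma b_nines_digit a q r c e : b_nines a q r c 1 e = (q * e + r) / Rpower e a.
Proof. by rewrite /b_nines Rpower_1_l Rmult_1_r; congr (_ / _); [ring | congr Rpower; ring]. Qed.

Lemma INR_nines (s e k : nat) : (0 < s)%nat -> INR (nines s e k) = (INR e + 1) * INR s ^ k - 1.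
Proof.
move=> s_gt0; rewrite /nines minus_INR ?plus_INR ?mult_INR ?pow_INR /=; first ring.
by apply/leP; rewrite Nat_powE -[1%nat]add0n leq_add // expn_gt0 s_gt0.
Qed.

Lemma INR_geometric_sum (p k : nat) : (1 < p)%nat ->
  INR (\sum_(i < k) p ^ i) = (INR p ^ k - 1) / (INR p - 1).
Proof.
move=> p_gt1; have Rp_gt1 : 1 < INR p by apply: (lt_INR 1); apply/ltP.
have p_gt0 : (0 < p)%nat by lia.
have pk_gt0 : (0 < p ^ k)%nat by rewrite Nat_powE expn_gt0 p_gt0.
apply: (Rmult_eq_reg_l (INR p - 1)); last lra.
under eq_bigr do rewrite Nat_powE.
have := congr1 INR (predn_exp p k).
rewrite -!subn1 mult_INR !minus_INR -?Nat_powE ?pow_INR ?INR_1; try by apply/leP.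
by move=> <-; field; lra.
Qed.

End RealInequalities.

Section BSequence.
Local Open Scope R_scope.

Variables q r p : nat.
Local Notation s := (sA q r p).
Hypothesis s_bd : (1 < s <= p)%nat.

Local Notation a := (ln (INR p) / ln (INR s)).
Local Notation c := (INR (hh q r s.-1) / (INR p - 1)).

Let Rs_gt1 : 1 < INR s.
Proof. by apply: (lt_INR 1); case/andP: s_bd => /ltP. Qed.

Let Rp_ge_s : INR s <= INR p.
Proof. by apply/le_INR/leP; case/andP: s_bd. Qed.

Let Rpred_s : INR s.-1 = INR s - 1.
Proof. by rewrite -subn1 minus_INR ?INR_1 //; apply/leP; case/andP: s_bd; lia. Qed.

Lemma b_seq_nines e k : (0 < e < s)%nat ->
  b_seq q r p (nines s e k) = b_nines a (INR q) (INR r) c (INR s ^ k) (INR e).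
Proof.
move=> e_bd; have p_gt1 : (1 < p)%nat by case/andP: s_bd; lia.
have Rp_gt1 : 1 < INR p by apply: (lt_INR 1); apply/ltP.
rewrite /b_seq /b_nines INR_nines; last lia.
rewrite a_seq_nines //; last by case/andP: s_bd.
rewrite plus_INR !mult_INR pow_INR INR_geometric_sum // Rpower_pow_log_ratio; try lra.
set H := INR (hh q r s.-1); rewrite /hh plus_INR mult_INR.
by congr (_ / _); field; lra.
Qed.

Lemma b_seq_nines_last_le e k : (0 < e < s)%nat ->
  b_seq q r p (nines s s.-1 k) <= b_seq q r p (nines s e k).
Proof.
move=> e_bd; have s_gt1 : (1 < s)%nat by case/andP: s_bd.
have Rp_gt1 : 1 < INR p by lra.
rewrite !b_seq_nines //; last by rewrite prednK ?leqnn; lia.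
rewrite Rpred_s; apply: b_nines_last_le; try lra.
- by apply: log_ratio_ge1; lra.
- exact: pos_INR.
- by apply: Rmult_le_pos; [exact: pos_INR | apply/Rlt_le/Rinv_0_lt_compat; lra].
- by apply: pow_R1_Rle; lra.
- rewrite Rpower_log_ratio; try lra.
  by rewrite /hh plus_INR mult_INR Rpred_s; field; lra.
- have e_ge1 : 1 <= INR e by apply: (le_INR 1); apply/leP; lia.
  have e_le : INR e <= INR s - 1 by rewrite -Rpred_s; apply/le_INR/leP; lia.
  lra.
Qed.

Lemma b_seq_digit d : (0 < d < s)%nat ->
  b_seq q r p d = (INR q * INR d + INR r) / Rpower (INR d) a.
Proof. by move=> d_bd; rewrite -{1}(nines0 s d) b_seq_nines // b_nines_digit. Qed.

Lemma b_seq_succ_le e : (0 < e)%nat -> (e.+1 < s)%nat -> b_seq q r p e.+1 <= b_seq q r p e.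
Proof.
move=> e_gt0 lt_es; rewrite !b_seq_digit ?e_gt0 ?lt_es ?(ltn_trans _ lt_es) // S_INR.
apply: affine_div_Rpower_succ_le; try exact: pos_INR.
- by apply: log_ratio_ge1; lra.
- by apply: (le_INR 1); apply/leP.
Qed.

End BSequence.

Theorem mainTheorem15 (q r p : nat) :
  2 <= q -> r < q -> q + r < p ->
  (forall k eps : nat, 1 <= eps <= (sA q r p).-1 ->
     (b_seq q r p ((sA q r p) ^ k.+1 - 1)
        <= b_seq q r p (eps * (sA q r p) ^ k + (sA q r p) ^ k - 1))%R)
  /\
  (forall eps : nat, 1 <= eps -> eps.+1 <= (sA q r p).-1 ->
     (b_seq q r p eps.+1 <= b_seq q r p eps)%R).
Proof.
move=> _ ltrq ltqrp; set s := sA q r p.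
have s_bd : 1 < s <= p by rewrite sA_ge2 ?sA_le.
split=> [k eps eps_bd | eps eps_gt0 lt_eps_s].
- rewrite expS_sub1_nines -/(nines s eps k); last lia.
  by apply: b_seq_nines_last_le => //; lia.
- by apply: b_seq_succ_le => //; lia.
Qed.
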